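(* Let $n\in\mathbb N$ and let $(x_t)_{t\in\Omega}$ be a continuous frame for $\mathbb R^n$ with lower frame bound $A$. Then for every $x\in\mathbb R^n$, $(x_t)_{t\in\Omega}$ does $A^{-1/2}$-stable phase retrieval near $x$.
   Context: A continuous frame $(x_t)_{t\in\Omega}$ for a Hilbert space $H$ over a measure space $(\Omega,\mu)$ satisfies $A\|x\|^2\le\int_\Omega|\langle x,x_t\rangle|^2d\mu\le B\|x\|^2$ for all $x\in H$ with $B\ge A>0$ ($A$ a lower frame bound); its analysis operator is $\Theta(x)=(\langle x,x_t\rangle)_{t\in\Omega}\in L_2(\Omega)$, $|\Theta x|=(|\langle x,x_t\rangle|)_{t\in\Omega}$. For $x,y$ with $x\neq\lambda y$ for all scalars $|\lambda|=1$, set $\Psi(x,y)=\||\Theta x|-|\Theta y|\|_{L_2(\Omega)}/\min_{|\lambda|=1}\|x-\lambda y\|$. For $C>0$, the frame does $C$-stable phase retrieval near $x$ if $\liminf_{y\to x,\ y\notin\{\lambda x:|\lambda|=1\}} C\,\Psi(x,y)\ge1$. *)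

From HB Require Import structures.
From mathcomp Require Import all_boot all_order all_algebra.
From mathcomp Require Import all_classical all_reals all_analysis.
Set Implicit Arguments. Unset Strict Implicit. Unset Printing Implicit Defensive.
Import Order.TTheory GRing.Theory Num.Theory.
Import numFieldNormedType.Exports.
Local Open Scope classical_set_scope.
Local Open Scope ring_scope.

(* R^n is modelled as row vectors 'rV[R]_n with the standard (Euclidean)
   inner product and norm (NOT the library's max-norm on matrices). *)
Definition dotr {R : realType} {n : nat} (u v : 'rV[R]_n) : R :=
  \sum_(i < n) u 0 i * v 0 i.

Definition enorm {R : realType} {n : nat} (u : 'rV[R]_n) : R :=
  Num.sqrt (dotr u u).

Definition cont_frame_lower {R : realType} {d : measure_display}
  {Omega : measurableType d} (mu : {measure set Omega -> \bar R}) {n : nat}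
  (xt : Omega -> 'rV[R]_n) (A : R) : Prop :=
  exists B : R, 0 < A /\ A <= B /\
    forall x : 'rV[R]_n,
      measurable_fun setT (fun t => dotr x (xt t)) /\
      ((A * enorm x ^+ 2)%:E <= \int[mu]_t ((`|dotr x (xt t)| ^+ 2)%:E))%E /\
      (\int[mu]_t ((`|dotr x (xt t)| ^+ 2)%:E) <= (B * enorm x ^+ 2)%:E)%E.

(* Psi(x,y) = || |Theta x| - |Theta y| ||_{L2(mu)} / min_{|lam|=1} |x - lam y|.
   Over the reals the unimodular scalars are lam = 1 and lam = -1. *)
Definition Psi {R : realType} {d : measure_display}
  {Omega : measurableType d} (mu : {measure set Omega -> \bar R}) {n : nat}
  (xt : Omega -> 'rV[R]_n) (x y : 'rV[R]_n) : \bar R :=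
  (Lnorm mu 2%:E (fun t => (`|dotr x (xt t)| - `|dotr y (xt t)|)%:E) *
   ((Num.min (enorm (x - y)) (enorm (x + y)))^-1)%:E)%E.

Definition stable_pr_near {R : realType} {d : measure_display}
  {Omega : measurableType d} (mu : {measure set Omega -> \bar R}) {n : nat}
  (xt : Omega -> 'rV[R]_n) (C : R) (x : 'rV[R]_n) : Prop :=
  (1%:E <= limf_einf (fun y : 'rV[R]_n => C%:E * Psi mu xt x y)
            (within [set y | forall lam : R, (`|lam| = 1)%R -> y <> (lam *: x)%R]
                    (nbhs x)))%E.

From mathcomp Require Import all_boot all_order all_algebra.
From mathcomp Require Import all_classical all_reals all_analysis.
From mathcomp Require Import measurable_realfun ring lra.
Import numFieldNormedType.Exports.
Local Open Scope classical_set_scope.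
Import Order.TTheory GRing.Theory Num.Theory.
Local Open Scope ring_scope.
Set Implicit Arguments. Unset Strict Implicit.

(* Write a = <x, x_t> and b = <y, x_t>.  Where a and b have the same sign,
   ||a| - |b|| = |b - a| = |<y - x, x_t>|.  Where they have opposite signs,
   0 < a^2 < (b - a)^2 <= |y - x|^2 |x_t|^2, so for |y - x| <= eta such t lie
   in a set whose |x_t|^2-weighted measure tends to 0 with eta (dominated
   convergence; |x_t|^2 is integrable by the upper frame bound).  Hence
   || |Theta x| - |Theta y| ||^2 >= (A - o(1)) |y - x|^2 by the lower frame
   bound, and |y - x| >= min(|x - y|, |x + y|). *)

Section euclidean.
Variables (R : realType) (n : nat).
Implicit Types u v w : 'rV[R]_n.

Lemma dotrBl u v w : dotr (u - v) w = dotr u w - dotr v w.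
Proof. by rewrite /dotr -sumrB; apply: eq_bigr => i _; rewrite !mxE mulrBl. Qed.

Lemma dotr0 u : dotr u 0 = 0.
Proof. by rewrite /dotr big1 // => i _; rewrite mxE mulr0. Qed.

Lemma dotr_delta_mx (i : 'I_n) v : dotr (delta_mx 0 i) v = v 0 i.
Proof.
rewrite /dotr (bigD1 i) //= big1 ?addr0; first by rewrite mxE !eqxx mul1r.
by move=> j ji; rewrite mxE eqxx /= (negbTE ji) mul0r.
Qed.

Lemma dotr_ge0 u : 0 <= dotr u u.
Proof. by apply: sumr_ge0 => i _; rewrite -expr2 sqr_ge0. Qed.

Lemma dotr_eq0 u : (dotr u u == 0) = (u == 0).
Proof.
apply/idP/eqP => [|->]; last by rewrite dotr0.
rewrite /dotr psumr_eq0 => [/allP u0|i _]; last by rewrite -expr2 sqr_ge0.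
apply/matrixP => i j; rewrite (ord1 i) mxE.
by have := u0 j (mem_index_enum _); rewrite /= mulf_eq0 orbb => /eqP.
Qed.

Lemma cauchy_schwarz u w : dotr u w ^+ 2 <= dotr u u * dotr w w.
Proof.
have [/eqP|w0] := eqVneq (dotr w w) 0.
  by rewrite dotr_eq0 => /eqP ->; rewrite !dotr0 expr0n mulr0.
have w_gt0 : 0 < dotr w w by rewrite lt0r w0 dotr_ge0.
have quad a b : \sum_(i < n) (a * u 0 i + b * w 0 i) ^+ 2 =
    a ^+ 2 * dotr u u + 2 * a * b * dotr u w + b ^+ 2 * dotr w w.
  by rewrite /dotr !mulr_sumr -!big_split /=; apply: eq_bigr => i _; ring.
have : 0 <= \sum_(i < n) (dotr w w * u 0 i + (- dotr u w) * w 0 i) ^+ 2.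
  by apply: sumr_ge0 => i _; exact: sqr_ge0.
rewrite quad; have -> : dotr w w ^+ 2 * dotr u u + 2 * dotr w w * - dotr u w * dotr u w
    + (- dotr u w) ^+ 2 * dotr w w = dotr w w * (dotr u u * dotr w w - dotr u w ^+ 2).
  by ring.
by rewrite pmulr_rge0 // subr_ge0.
Qed.

Lemma enorm_ge0 u : 0 <= enorm u.
Proof. exact: sqrtr_ge0. Qed.

Lemma sqr_enorm u : enorm u ^+ 2 = dotr u u.
Proof. by rewrite /enorm sqr_sqrtr // dotr_ge0. Qed.

Lemma enormN u : enorm (- u) = enorm u.
Proof.
by rewrite /enorm /dotr; congr Num.sqrt; apply: eq_bigr => i _; rewrite !mxE mulrNN.
Qed.

Lemma enorm_gt0 u : u != 0 -> 0 < enorm u.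
Proof. by rewrite -dotr_eq0 => u0; rewrite sqrtr_gt0 lt0r u0 dotr_ge0. Qed.

Lemma enorm_le_coord u (r : R) : 0 <= r -> (forall i, `|u 0 i| <= r) ->
  enorm u <= n%:R * r.
Proof.
move=> r0 ur; rewrite -ler_sqr ?nnegrE ?enorm_ge0 ?mulr_ge0 //.
rewrite sqr_enorm exprMn (@le_trans _ _ (n%:R * r ^+ 2)) //.
  have -> : n%:R * r ^+ 2 = \sum_(i < n) r ^+ 2 by rewrite sumr_const card_ord mulr_natl.
  rewrite /dotr ler_sum // => i _.
  by rewrite -expr2 -real_normK ?num_real // lerXn2r ?nnegrE.
rewrite ler_wpM2r ?sqr_ge0 // -natrX ler_nat expnS expn1.
by case: (posnP n) => [-> | /leq_pmulr].
Qed.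

End euclidean.

Lemma limf_einf_ge (R : realType) (T : choiceType) (X : filteredType T)
    (F : set_system X) (f : X -> \bar R) (l : R) :
  (forall c, c < l -> \forall y \near F, (c%:E <= f y)%E) -> (l%:E <= limf_einf f F)%E.
Proof.
move=> near_ge; rewrite limf_einfE; apply/lee_subgt0Pr => e e0.
rewrite -EFinB; apply: le_trans (ereal_sup_ubound _); last first.
  by exists [set y | ((l - e)%:E <= f y)%E] => //; apply: near_ge; rewrite gtrDl oppr_lt0.
by apply: le_ereal_inf_tmp => _ [y ley <-].
Qed.

Lemma Lnorm2_EFin (R : realType) (d : measure_display) (T : measurableType d)
  (mu : {measure set T -> \bar R}) (u : T -> R) :
  Lnorm mu 2%:E (fun t => (u t)%:E) = ((\int[mu]_t ((u t ^+ 2)%:E)) `^ 2^-1)%E.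
Proof.
rewrite unlock /=; congr (_ `^ _)%E; apply: eq_integral => t _.
by rewrite /= (@powR_mulrn _ _ 2) ?normr_ge0 // real_normK ?num_real.
Qed.

Lemma near_enorm_subr_le (R : realType) (n : nat) (x : 'rV[R]_n) (eta : R) :
  0 < eta -> \forall y \near x, enorm (y - x) <= eta.
Proof.
move=> eta0; pose r := eta / n.+1%:R.
have r0 : 0 < r by rewrite divr_gt0.
near=> y; have [_ bxy] : ball x r y by near: y; apply: nbhsx_ballx.
apply: (le_trans (enorm_le_coord (ltW r0) _)) => [i|].
  by have := bxy 0 i; rewrite /ball /= !mxE distrC => /ltW.
by rewrite /r mulrCA ger_pMr // ler_pdivrMr ?mul1r ?ler_nat.
Unshelve. all: by end_near.
Qed.

(* With a = <x, x_t> and G = |x_t|^2: the weight of those t at which a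
   perturbation of size eta * sqrt G may flip the sign of a != 0. *)
Definition bad_weight (R : realType) (eta a G : R) : R :=
  if (0 < a ^+ 2) && (a ^+ 2 < eta ^+ 2 * G) then G else 0.

Lemma bad_weight_ge0 (R : realType) (eta a G : R) : 0 <= G -> 0 <= bad_weight eta a G.
Proof. by rewrite /bad_weight; case: ifP. Qed.

Lemma sqrB_le_sqr_normB_bad_weight (R : realType) (a b G e eta : R) :
  0 <= G -> 0 <= e -> e <= eta -> (b - a) ^+ 2 <= e ^+ 2 * G ->
  (b - a) ^+ 2 <= (`|a| - `|b|) ^+ 2 + e ^+ 2 * bad_weight eta a G.
Proof.
move=> G0 e0 e_eta ba_le.
have [ab0|ab0] := leP 0 (a * b).
  have -> : (`|a| - `|b|) ^+ 2 = (b - a) ^+ 2.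
    by rewrite sqrrB -normrM ger0_norm // !real_normK ?num_real //; ring.
  by rewrite lerDl mulr_ge0 ?sqr_ge0 ?bad_weight_ge0.
have a2_gt0 : 0 < a ^+ 2.
  by rewrite lt0r sqr_ge0 sqrf_eq0 andbT; apply: contraTneq ab0 => ->; rewrite mul0r ltxx.
have a2_lt : a ^+ 2 < (b - a) ^+ 2.
  by rewrite -subr_gt0 (_ : _ - _ = b ^+ 2 - 2 * (a * b)); [nra | ring].
have e2_le : e ^+ 2 * G <= eta ^+ 2 * G by rewrite ler_wpM2r // lerXn2r ?nnegrE // (le_trans e0).
rewrite /bad_weight a2_gt0 (lt_le_trans a2_lt (le_trans ba_le e2_le)).
by apply: le_trans ba_le _; rewrite lerDr sqr_ge0.
Qed.

Lemma bad_weight_cvg0 (R : realType) (a G : R) :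
  \forall k \near \oo, bad_weight k.+1%:R^-1 a G = 0.
Proof.
rewrite /bad_weight; have [_|a2_gt0] := leP (a ^+ 2) 0; first by near=> k.
have : (fun k : nat => k.+1%:R^-1 ^+ 2 * G) @ \oo --> (0 : R).
  rewrite -[0](mul0r G) -(mul0r 0); under eq_fun do rewrite expr2.
  exact: cvgM (cvgM cvg_harmonic cvg_harmonic) (cvg_cst G).
move=> /cvgr_lt /(_ _ a2_gt0); apply: filterS => k /ltW.
by rewrite leNgt => /negbTE ->.
Unshelve. all: by end_near.
Qed.

Section frame.
Variables (R : realType) (d : measure_display) (Omega : measurableType d)
  (mu : {measure set Omega -> \bar R}) (n : nat) (xt : Omega -> 'rV[R]_n).
Hypothesis measurable_analysis : forall x, measurable_fun setT (fun t => dotr x (xt t)).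

Lemma measurable_frame_sqnorm : measurable_fun setT (fun t => dotr (xt t) (xt t)).
Proof.
apply: measurable_sum => i; apply: measurable_funM;
by under eq_fun do rewrite -dotr_delta_mx; apply: measurable_analysis.
Qed.

Lemma measurable_bad_weight (eta : R) (a : Omega -> R) : measurable_fun setT a ->
  measurable_fun setT (fun t => bad_weight eta (a t) (dotr (xt t) (xt t))).
Proof.
move=> ma; have mG := measurable_frame_sqnorm.
apply: measurable_fun_ifT => //; apply: measurable_and.
  by apply: measurable_fun_ltr => //; exact: measurable_funX.
by apply: measurable_fun_ltr; [exact: measurable_funX | exact: measurable_funM].
Qed.

Hypothesis analysis_sqr_integrable :
  forall x, (\int[mu]_t ((`|dotr x (xt t)| ^+ 2)%:E) < +oo)%E.

Lemma integrable_frame_sqnorm : mu.-integrable setT (fun t => (dotr (xt t) (xt t))%:E).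
Proof.
apply/integrableP; split; first exact/measurable_EFinP/measurable_frame_sqnorm.
have -> : (fun t => `|(dotr (xt t) (xt t))%:E|%E) =
    (fun t => \sum_(i < n) ((`|dotr (delta_mx 0 i) (xt t)| ^+ 2)%:E))%E.
  apply/funext => t; rewrite sumEFin gee0_abs ?lee_fin ?dotr_ge0 //; congr (_%:E).
  by apply: eq_bigr => i _; rewrite dotr_delta_mx real_normK ?num_real // expr2.
rewrite ge0_integral_sum => [|//|i|i t _]; last by rewrite lee_fin sqr_ge0.
  by apply: lte_sum_pinfty => i _; exact: analysis_sqr_integrable.
apply/measurable_EFinP; apply: measurable_funX.
by apply: measurableT_comp => //; exact: measurable_analysis.
Qed.

(* Dominated convergence, with dominating function [|x_t|^2]. *)
Lemma integral_bad_weight_small (a : Omega -> R) (del : R) :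
  measurable_fun setT a -> 0 < del ->
  exists2 eta, 0 < eta &
    (\int[mu]_t ((bad_weight eta (a t) (dotr (xt t) (xt t)))%:E) <= del%:E)%E.
Proof.
move=> ma del0.
pose f_ k t := (bad_weight k.+1%:R^-1 (a t) (dotr (xt t) (xt t)))%:E.
have mf_ k : measurable_fun setT (f_ k) by exact/measurable_EFinP/measurable_bad_weight.
have f_cvg0 : {ae mu, forall t, setT t -> f_ ^~ t @ \oo --> (fun=> 0%E) t}.
  apply: aeW => t _; apply: cvg_near_cst.
  by apply: filterS (bad_weight_cvg0 (a t) (dotr (xt t) (xt t))) => k; rewrite /f_ => ->.
have f_le : {ae mu, forall t k, setT t -> (`|f_ k t| <= (dotr (xt t) (xt t))%:E)%E}.
  apply: aeW => t k _; rewrite /f_ /bad_weight.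
  by case: ifP => _; rewrite gee0_abs ?lee_fin ?dotr_ge0.
have [_ _] := dominated_convergence measurableT mf_ (measurable_cst _) f_cvg0
  integrable_frame_sqnorm f_le.
have del_gt0 : (0 < del%:E)%E by rewrite lte_fin.
rewrite integral0 => /(_ _ (open_ereal_lt' del_gt0)) [N _ /(_ N (leqnn N))].
by move=> /= /ltW; exists N.+1%:R^-1; rewrite ?invr_gt0.
Qed.

Lemma sqr_dist_abs_ge (A del eta : R) (x y : 'rV[R]_n) :
  (forall z, ((A * enorm z ^+ 2)%:E <= \int[mu]_t ((`|dotr z (xt t)| ^+ 2)%:E))%E) ->
  enorm (y - x) <= eta ->
  (\int[mu]_t ((bad_weight eta (dotr x (xt t)) (dotr (xt t) (xt t)))%:E) <= del%:E)%E ->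
  (((A - del) * enorm (y - x) ^+ 2)%:E <=
    \int[mu]_t (((`|dotr x (xt t)| - `|dotr y (xt t)|) ^+ 2)%:E))%E.
Proof.
move=> lower e_le small; set e := enorm (y - x).
set h := fun t => bad_weight eta (dotr x (xt t)) (dotr (xt t) (xt t)).
set D := fun t => (`|dotr x (xt t)| - `|dotr y (xt t)|) ^+ 2.
have mh : measurable_fun setT h := measurable_bad_weight eta (measurable_analysis x).
have mD : measurable_fun setT D.
  by apply/measurable_funX/measurable_funB; apply: measurableT_comp.
have h0 t : 0 <= h t by apply/bad_weight_ge0/dotr_ge0.
have pointwise t : `|dotr (y - x) (xt t)| ^+ 2 <= D t + e ^+ 2 * h t.
  rewrite real_normK ?num_real // dotrBl.
  apply: sqrB_le_sqr_normB_bad_weight => //; [exact: dotr_ge0 | exact: enorm_ge0 |].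
  by rewrite -dotrBl /e sqr_enorm cauchy_schwarz.
have mDE : measurable_fun setT (fun t => (D t)%:E) by exact/measurable_EFinP.
have mhE : measurable_fun setT (fun t => (h t)%:E) by exact/measurable_EFinP.
have D0 t : setT t -> (0 <= (D t)%:E)%E by rewrite lee_fin sqr_ge0.
have h0E t : setT t -> (0 <= (h t)%:E)%E by rewrite lee_fin.
have Zh0 t : setT t -> (0 <= (e ^+ 2)%:E * (h t)%:E)%E.
  by rewrite -EFinM lee_fin mulr_ge0 ?sqr_ge0.
have mZhE : measurable_fun setT (fun t => ((e ^+ 2)%:E * (h t)%:E)%E).
  exact/measurable_EFinP/measurable_funM.
have : ((A * e ^+ 2)%:E <= \int[mu]_t (D t)%:E + (e ^+ 2)%:E * \int[mu]_t (h t)%:E)%E.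
  rewrite (le_trans (lower (y - x))) // -ge0_integralZl_EFin ?sqr_ge0 //.
  rewrite -ge0_integralD //; apply: ge0_le_integral => //.
  - apply/measurable_EFinP/measurable_funX.
    by apply: measurableT_comp => //; exact: measurable_analysis.
  - exact: emeasurable_funD.
  - by move=> t _; rewrite -EFinM -EFinD lee_fin pointwise.
move=> /le_trans /(_ (leeD (lexx _) (lee_wpmul2l _ small))).
have -> : (A - del) * e ^+ 2 = A * e ^+ 2 - e ^+ 2 * del by ring.
by rewrite EFinB leeBlDr // EFinM; apply; rewrite lee_fin sqr_ge0.
Qed.

Lemma Psi_ge (c : R) (x y : 'rV[R]_n) : 0 <= c -> x - y != 0 -> x + y != 0 ->
  (((c * enorm (y - x)) ^+ 2)%:E <=
    \int[mu]_t (((`|dotr x (xt t)| - `|dotr y (xt t)|) ^+ 2)%:E))%E ->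
  (c%:E <= Psi mu xt x y)%E.
Proof.
move=> c0 xy0 xPy0; rewrite /Psi Lnorm2_EFin.
set m := Num.min _ _; set e := enorm (y - x).
have m_gt0 : 0 < m by rewrite lt_min !enorm_gt0.
have m_le : m <= e by rewrite /m /e -opprB enormN ge_min lexx.
move: (\int[mu]_t _)%E => [s| |] //= ce_le; last first.
  by rewrite invr_eq0 pnatr_eq0 /= mulyr gtr0_sg ?invr_gt0 // mul1e leey.
have s0 : 0 <= s by rewrite -lee_fin (le_trans _ ce_le) ?lee_fin ?sqr_ge0.
rewrite powR12_sqrt // -EFinM lee_fin ler_pdivlMr //.
have ce_ge0 : 0 <= c * e by rewrite mulr_ge0 ?enorm_ge0.
have : c * e <= Num.sqrt s by rewrite -(ger0_norm ce_ge0) -sqrtr_sqr ler_sqrt -?lee_fin.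
exact/le_trans/ler_wpM2l.
Qed.

Variable A : R.
Hypothesis A_gt0 : 0 < A.
Hypothesis frame_lower :
  forall z, ((A * enorm z ^+ 2)%:E <= \int[mu]_t ((`|dotr z (xt t)| ^+ 2)%:E))%E.

Lemma near_Psi_ge (x : 'rV[R]_n) (c : R) : 0 <= c < 1 ->
  \forall y \near within [set y | forall lam : R, `|lam| = 1 -> y <> lam *: x] (nbhs x),
    (c%:E <= ((Num.sqrt A)^-1)%:E * Psi mu xt x y)%E.
Proof.
case/andP => c0 c1; pose del := A * (1 - c ^+ 2).
have del_gt0 : 0 < del by rewrite mulr_gt0 // subr_gt0 exprn_ilt1.
have [eta eta_gt0 small] := integral_bad_weight_small (measurable_analysis x) del_gt0.
have sqrtA_gt0 : 0 < Num.sqrt A by rewrite sqrtr_gt0.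
rewrite near_withinE; near=> y => y_unimod.
have xy0 : x - y != 0.
  by rewrite subr_eq0; apply/eqP => xy; apply: (y_unimod 1); rewrite ?normr1 ?scale1r.
have xPy0 : x + y != 0.
  rewrite addr_eq0; apply/eqP => xy; apply: (y_unimod (-1)).
    by rewrite normrN normr1.
  by rewrite scaleN1r xy opprK.
have ye : enorm (y - x) <= eta by near: y; exact: near_enorm_subr_le.
have := sqr_dist_abs_ge frame_lower ye small.
rewrite (_ : A - del = (c * Num.sqrt A) ^+ 2); last first.
  by rewrite exprMn sqr_sqrtr ?(ltW A_gt0) // /del; ring.
rewrite -exprMn => /Psi_ge-/(_ _ xy0 xPy0) Psi_ge_c.
rewrite -[c](mulKf (lt0r_neq0 sqrtA_gt0)) (mulrC (Num.sqrt A) c) EFinM.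
apply: lee_wpmul2l; first by rewrite lee_fin invr_ge0 ltW.
exact: Psi_ge_c (mulr_ge0 c0 (ltW sqrtA_gt0)).
Unshelve. all: by end_near.
Qed.

End frame.

Theorem theorem3p2 (R : realType) (d : measure_display) (Omega : measurableType d)
  (mu : {measure set Omega -> \bar R}) (n : nat) (xt : Omega -> 'rV[R]_n) (A : R) :
  cont_frame_lower mu xt A ->
  forall x : 'rV[R]_n, stable_pr_near mu xt (Num.sqrt A)^-1 x.
Proof.
move=> [B [A_gt0 [_ frame]]] x.
have measurable_analysis z := (frame z).1.
have sqr_integrable z := le_lt_trans (frame z).2.2 (ltry (B * enorm z ^+ 2)).
have frame_lower z := (frame z).2.1.
apply: limf_einf_ge => c c1; set c' := Num.max c 0.
have c'_bound : 0 <= c' < 1 by rewrite le_max lexx orbT /= gt_max c1 ltr01.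
apply: filterS (near_Psi_ge measurable_analysis sqr_integrable A_gt0 frame_lower x c'_bound).
by move=> y; apply: le_trans; rewrite lee_fin le_max lexx.
Qed.
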